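(* Let $X$ be a compactum with compatible metric $d$, let $n\geq2$, and let $f:X\to X$ be a function. Consider the statements: (1) $f$ is accessible; (2) $F_n(f)$ is accessible; (3) $SF_n(f)$ is accessible. Then (2) implies (1), and (2) implies (3).
   Context: A compactum is a nondegenerate compact, perfect, Hausdorff topological space. $F_n(X)$ is the set of nonempty subsets of $X$ with at most $n$ points, with the Hausdorff metric $d_H$; $F_1(X)=\{\{x\}:x\in X\}$; $F_n(f)(A)=f(A)$. $SF_n(X)=F_n(X)/F_1(X)$ is the quotient collapsing $F_1(X)$ to a point, $q$ the quotient map, $F_X=q(F_1(X))$, and $SF_n(f)(\chi)=q(F_n(f)(q^{-1}(\chi)))$ for $\chi\neq F_X$, $SF_n(f)(F_X)=F_X$. $SF_n(X)$ carries the metric $\rho(\chi_1,\chi_2)=\mathcal{H}^2(F_1(X)\cup q^{-1}(\chi_1),F_1(X)\cup q^{-1}(\chi_2))$, with $\mathcal{H}^2$ the Hausdorff metric on closed subsets of $F_n(X)$ induced by $d_H$. A function $g$ on a metric space $(Z,D)$ is accessible if for every $\varepsilon>0$ and all nonempty open $U,V\subseteq Z$ there exist $x\in U$, $y\in V$ and $m\in\mathbb{N}$ with $D(g^m(x),g^m(y))<\varepsilon$ (with $D=d,d_H,\rho$ for $f,F_n(f),SF_n(f)$). *)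

From Stdlib Require List.
From HB Require Import structures.
From mathcomp Require Import all_boot all_order all_algebra.
From mathcomp Require Import all_classical all_reals.
Set Implicit Arguments. Unset Strict Implicit. Unset Printing Implicit Defensive.
Import Order.TTheory GRing.Theory Num.Theory.
Local Open Scope classical_set_scope.
Local Open Scope ring_scope.

Definition is_metric {R : realType} {T : Type} (d : T -> T -> R) : Prop :=
  (forall x y, 0 <= d x y) /\
  (forall x y, d x y = 0 <-> x = y) /\
  (forall x y, d x y = d y x) /\
  (forall x y z, d x z <= d x y + d y z).

Definition open_in {R : realType} {Z : Type} (S : set Z) (D : Z -> Z -> R)
  (U : set Z) : Prop :=
  U `<=` S /\
  forall x, U x -> exists2 r : R, 0 < r &
    forall y, S y -> D x y < r -> U y.

Definition metric_compact {R : realType} {T : Type} (d : T -> T -> R) : Prop :=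
  forall (I : Type) (U : I -> set T),
    (forall i, open_in setT d (U i)) ->
    (forall x, exists i, U i x) ->
    exists s : seq I, forall x, exists2 i, List.In i s & U i x.

Definition metric_perfect {R : realType} {T : Type} (d : T -> T -> R) : Prop :=
  forall x (e : R), 0 < e -> exists y, y <> x /\ d x y < e.

(* compactum: nondegenerate compact perfect (Hausdorff, being metric) *)
Definition compactum {R : realType} {T : Type} (d : T -> T -> R) : Prop :=
  is_metric d /\ metric_compact d /\ metric_perfect d /\
  exists x y : T, x <> y.

Definition accessible {R : realType} {Z : Type} (S : set Z) (D : Z -> Z -> R)
  (g : Z -> Z) : Prop :=
  forall (eps : R), 0 < eps ->
  forall U V : set Z, open_in S D U -> open_in S D V ->
    (exists u, U u) -> (exists v, V v) ->
    exists x y (m : nat), [/\ U x, V y, (0 < m)%N &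
      D (iter m g x) (iter m g y) < eps].

Definition dist_pt {R : realType} {Z : Type} (D : Z -> Z -> R) (x : Z)
  (B : set Z) : R := inf [set D x b | b in B].

Definition hausdorff {R : realType} {Z : Type} (D : Z -> Z -> R)
  (A B : set Z) : R :=
  Num.max (sup [set dist_pt D a B | a in A]) (sup [set dist_pt D b A | b in B]).

Definition Fn {T : Type} (n : nat) : set (set T) :=
  [set A | (exists x, A x) /\
           exists s : seq T, (size s <= n)%N /\ A = [set x | List.In x s]].

Definition F1 {T : Type} : set (set T) := [set A | exists x : T, A = [set x]].

Definition Fn_map {T : Type} (f : T -> T) (A : set T) : set T := f @` A.

(* the quotient map q : F_n(X) -> SF_n(X); a point of SF_n(X) is represented
   by its fibre q^{-1}(chi), i.e. F_1(X) or a singleton {A} with A not in F_1 *)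
Definition qcls {T : Type} (A : set T) : set (set T) :=
  [set C | (F1 A /\ F1 C) \/ C = A].

Definition SFn {T : Type} (n : nat) : set (set (set T)) :=
  [set c | exists2 A, Fn n A & c = qcls A].

(* SF_n(f)(chi) = q(F_n(f)(q^{-1}(chi))) *)
Definition SFn_map {T : Type} (f : T -> T) (c : set (set T)) : set (set T) :=
  [set C | exists2 A, c A & qcls (Fn_map f A) C].

Definition rho {R : realType} {T : Type} (d : T -> T -> R)
  (c1 c2 : set (set T)) : R :=
  hausdorff (hausdorff d) (F1 `|` c1) (F1 `|` c2).

From HB Require Import structures.
From mathcomp Require Import all_boot all_order all_algebra.
From mathcomp Require Import all_classical all_reals.
Set Implicit Arguments.
Unset Strict Implicit.
Unset Printing Implicit Defensive.
Import Order.TTheory GRing.Theory Num.Theory.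
Local Open Scope classical_set_scope.
Local Open Scope ring_scope.

(* For an open U of X, the sets A of F_n(X) with A inside U form an open set
   containing every singleton {u} with u in U; hence if F_n(f)^m brings some
   A inside U Hausdorff-close to some B inside V, a point f^m(a), a in A, is
   close to a point f^m(b), b in B, and f is accessible.  For SF_n, the
   quotient map q is onto, 1-Lipschitz from d_H to rho, and semiconjugates
   F_n(f) to SF_n(f); accessibility passes along any such map, because
   preimages of nonempty open sets are nonempty and open. *)

Lemma list_image_has_ubound (R : realType) (Z : Type) (s : seq Z)
    (g : Z -> R) (A : set Z) :
  A `<=` [set x | List.In x s] -> has_ubound [set g a | a in A].
Proof.
move=> As.
have [M gM] : exists M, forall x, List.In x s -> g x <= M.
  elim: s {As} => [|x s [M gM]]; first by exists 0.
  exists (Num.max (g x) M) => y [<-|/gM gyM]; first by rewrite le_max lexx.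
  by rewrite le_max gyM orbT.
by exists M => _ [a /As sa <-]; exact: gM.
Qed.

Lemma open_in_list_radius (R : realType) (Z : Type) (S : set Z)
    (D : Z -> Z -> R) (W : set Z) (s : seq Z) :
  open_in S D W -> (forall a, List.In a s -> W a) ->
  exists2 r : R, 0 < r &
    forall a, List.In a s -> forall y, S y -> D a y < r -> W y.
Proof.
move=> [_ oW]; elim: s => [|a s IH] sW; first by exists 1.
have [ra ra_gt0 Wa] := oW a (sW a (or_introl erefl)).
have [rs rs_gt0 Ws] := IH (fun b sb => sW b (or_intror sb)).
exists (Num.min ra rs); first by rewrite lt_min ra_gt0 rs_gt0.
move=> b [<-|sb] y Sy; rewrite lt_min => /andP[lt_ra lt_rs].
  exact: Wa.
exact: Ws sb _ Sy lt_rs.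
Qed.

Section HausdorffDistance.
Variables (R : realType) (Z : Type) (D : Z -> Z -> R).
Hypothesis D_ge0 : forall x y, 0 <= D x y.

Lemma dist_pt_ge0 a B : 0 <= dist_pt D a B.
Proof.
rewrite /dist_pt; have [->|/set0P neq0] := eqVneq [set D a b | b in B] set0.
  by rewrite inf0.
by apply: lb_le_inf => // _ [b _ <-].
Qed.

Lemma dist_pt_le a B b : B b -> dist_pt D a B <= D a b.
Proof.
by move=> Bb; apply: ge_inf; [exists 0 => _ [c _ <-] | exists b].
Qed.

Lemma dist_pt_ltP a B r : B !=set0 -> dist_pt D a B < r ->
  exists2 b, B b & D a b < r.
Proof.
move=> [b Bb] /inf_lt[|_ [c Bc <-] ltr]; last by exists c.
by exists (D a b), b.
Qed.

Lemma hausdorffC A B : hausdorff D A B = hausdorff D B A.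
Proof. by rewrite /hausdorff maxC. Qed.

Lemma hausdorff_ge0 A B : 0 <= hausdorff D A B.
Proof.
rewrite le_max; apply/orP; left.
have [hs|no_sup] := pselect (has_sup [set dist_pt D a B | a in A]).
  have [[_ [a Aa _]] _] := hs.
  apply: le_trans (dist_pt_ge0 a B) _.
  by apply: sup_upper_bound => //; exists a.
by rewrite sup_out.
Qed.

Lemma hausdorff_le A B M : A !=set0 -> B !=set0 ->
  (forall a, A a -> dist_pt D a B <= M) ->
  (forall b, B b -> dist_pt D b A <= M) -> hausdorff D A B <= M.
Proof.
move=> [a Aa] [b Bb] AM BM; rewrite ge_max; apply/andP; split.
  by apply: ge_sup; [exists (dist_pt D a B), a | move=> _ [x Ax <-]; exact: AM].
by apply: ge_sup; [exists (dist_pt D b A), b | move=> _ [x Bx <-]; exact: BM].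
Qed.

Lemma dist_pt_le_hausdorff (s : seq Z) A B a :
  A `<=` [set x | List.In x s] -> A a -> dist_pt D a B <= hausdorff D A B.
Proof.
move=> As Aa; rewrite le_max; apply/orP; left.
by apply: ub_le_sup; [exact: list_image_has_ubound As | exists a].
Qed.

Lemma hausdorff_set1 x : D x x = 0 -> hausdorff D [set x] [set x] = 0.
Proof.
move=> Dxx; apply/eqP; rewrite eq_le hausdorff_ge0 andbT.
apply: hausdorff_le; try by exists x.
all: by move=> _ ->; rewrite -Dxx dist_pt_le.
Qed.

End HausdorffDistance.

Section AccessibleSemiconj.
Variables (R : realType) (Z Z' : Type) (S : set Z) (S' : set Z').
Variables (D : Z -> Z -> R) (D' : Z' -> Z' -> R).
Variables (g : Z -> Z) (g' : Z' -> Z') (phi : Z -> Z').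
Hypothesis phi_onto : S' = phi @` S.
Hypothesis phi_lipschitz : forall x y, D' (phi x) (phi y) <= D x y.
Hypothesis phi_semiconj : forall x, phi (g x) = g' (phi x).

Lemma iter_semiconj m x : iter m g' (phi x) = phi (iter m g x).
Proof. by elim: m => //= m ->; rewrite phi_semiconj. Qed.

Lemma open_in_preimage W : open_in S' D' W -> open_in S D (S `&` phi @^-1` W).
Proof.
move=> [_ oW]; split=> [x []//|x [Sx Wx]].
have [r r_gt0 rW] := oW _ Wx; exists r => // y Sy Dxy; split=> //.
by apply: rW; [rewrite phi_onto; exists y | exact: le_lt_trans Dxy].
Qed.

Lemma preimage_neq0 W : W `<=` S' -> W !=set0 -> S `&` phi @^-1` W !=set0.
Proof.
move=> WS' [w /[dup] /WS' + Ww]; rewrite phi_onto => -[x Sx xw].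
by exists x; split; rewrite // /preimage /= xw.
Qed.

Lemma accessible_semiconj : accessible S D g -> accessible S' D' g'.
Proof.
move=> acc eps eps_gt0 U V oU oV U_neq0 V_neq0.
have [x [y [m [[_ Ux] [_ Vy] m_gt0 close]]]] :=
  acc eps eps_gt0 _ _ (open_in_preimage oU) (open_in_preimage oV)
    (preimage_neq0 oU.1 U_neq0) (preimage_neq0 oV.1 V_neq0).
exists (phi x), (phi y), m; split=> //.
by rewrite !iter_semiconj; exact: le_lt_trans close.
Qed.

End AccessibleSemiconj.

Section Hyperspaces.
Variables (R : realType) (T : Type) (d : T -> T -> R) (n : nat) (f : T -> T).
Hypothesis d_ge0 : forall x y, 0 <= d x y.
Hypothesis d_refl : forall x, d x x = 0.
Hypothesis d_sym : forall x y, d x y = d y x.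

Lemma Fn_set1 (x : T) : (0 < n)%N -> Fn n [set x].
Proof.
move=> n_gt0; split; first by exists x.
exists [:: x]; split=> //.
by apply/seteqP; split=> y /=; [move->; left | case=> [<-|[]]].
Qed.

Lemma iter_Fn_map m A : iter m (Fn_map f) A = iter m f @` A.
Proof.
elim: m => [|m IH] /=; first exact/esym/image_id.
by rewrite IH /Fn_map image_comp.
Qed.

Lemma open_in_Fn_subset U : open_in setT d U ->
  open_in (Fn n) (hausdorff d) [set A | Fn n A /\ A `<=` U].
Proof.
move=> oU; split=> [A []//|A [[A_neq0 [s [_ As]]] AU]].
have [r r_gt0 rU] : exists2 r : R, 0 < r &
    forall a, List.In a s -> forall y, setT y -> d a y < r -> U y.
  by apply: open_in_list_radius => // a sa; apply: AU; rewrite As.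
exists r => // B FB AB; split=> // b Bb.
have [_ [t [_ Bt]]] := FB.
have b_near_A : dist_pt d b A < r.
  apply: le_lt_trans AB; rewrite hausdorffC.
  by apply: (@dist_pt_le_hausdorff _ _ d t) => //; rewrite Bt.
have [a Aa ab] := dist_pt_ltP A_neq0 b_near_A.
by rewrite d_sym in ab; apply: rU ab => //; rewrite As in Aa.
Qed.

Lemma accessible_of_Fn_map : (0 < n)%N ->
  accessible (Fn n) (hausdorff d) (Fn_map f) -> accessible setT d f.
Proof.
move=> n_gt0 acc eps eps_gt0 U V oU oV U_neq0 V_neq0.
have subsets_neq0 (W : set T) : W !=set0 -> [set A | Fn n A /\ A `<=` W] !=set0.
  by case=> w Ww; exists [set w]; split; [exact: Fn_set1 | move=> _ ->].
have [A [B [m [[[A_neq0 [s [_ As]]] AU] [[B_neq0 _] BV] m_gt0]]]] :=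
  acc eps eps_gt0 _ _ (open_in_Fn_subset oU) (open_in_Fn_subset oV)
    (subsets_neq0 U U_neq0) (subsets_neq0 V V_neq0).
have [a Aa] := A_neq0; rewrite !iter_Fn_map => close.
have fB_neq0 : iter m f @` B !=set0.
  by have [b Bb] := B_neq0; exists (iter m f b), b.
have fa_near_fB : dist_pt d (iter m f a) (iter m f @` B) < eps.
  apply: le_lt_trans close.
  apply: (@dist_pt_le_hausdorff _ _ d (List.map (iter m f) s)); last first.
    by exists a.
  by move=> _ [x + <-]; rewrite As; exact: List.in_map.
have [_ [b Bb <-] ab] := dist_pt_ltP fB_neq0 fa_near_fB.
by exists a, b, m; split=> //; [exact: AU | exact: BV].
Qed.

Lemma rho_qcls_le A B : rho d (qcls A) (qcls B) <= hausdorff d A B.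
Proof.
have H_ge0 := hausdorff_ge0 d_ge0.
have near_A A' B' (C : set T) : (F1 `|` qcls A') C ->
    dist_pt (hausdorff d) C (F1 `|` qcls B') <= hausdorff d A' B'.
  have near_F1 (C' : set T) :
      F1 C' -> dist_pt (hausdorff d) C' (F1 `|` qcls B') <= 0.
    move=> F1C'; apply: le_trans (dist_pt_le H_ge0 _ (or_introl F1C')) _.
    by case: F1C' => x ->; rewrite hausdorff_set1.
  case=> [F1C|[[_ F1C]|->]]; try exact: le_trans (near_F1 _ F1C) (H_ge0 _ _).
  by apply: dist_pt_le => //; right; right.
by apply: hausdorff_le; [exists A; right; right | exists B; right; right
  | move=> C; exact: near_A | move=> C; rewrite hausdorffC; exact: near_A].
Qed.

Lemma SFn_map_qcls A : SFn_map f (qcls A) = qcls (Fn_map f A).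
Proof.
have F1_image B : F1 B -> F1 (Fn_map f B).
  by case=> x ->; exists (f x); rewrite /Fn_map image_set1.
apply/seteqP; split=> [C [A' [[F1A F1A'] | ->] //] | C qC]; last first.
  by exists A => //; right.
by case=> [[_ F1C] | ->]; left; split=> //; exact: F1_image.
Qed.

Lemma accessible_SFn_map_of_Fn_map :
  accessible (Fn n) (hausdorff d) (Fn_map f) ->
  accessible (SFn n) (rho d) (SFn_map f).
Proof.
apply: (accessible_semiconj (phi := qcls)).
- by apply/seteqP; split=> c [A FA cA]; exists A.
- exact: rho_qcls_le.
- by move=> A; rewrite SFn_map_qcls.
Qed.

End Hyperspaces.

Theorem theorem7 (R : realType) (T : Type) (d : T -> T -> R) (n : nat)
  (f : T -> T) :
  compactum d -> (2 <= n)%N ->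
  accessible (Fn n) (hausdorff d) (Fn_map f) ->
  accessible setT d f /\
  accessible (SFn n) (rho d) (SFn_map f).
Proof.
move=> [[d_ge0 [d_eq0 [d_sym _]]] _] n_ge2 acc.
have d_refl x : d x x = 0 by apply/d_eq0.
split; first exact: accessible_of_Fn_map (ltnW n_ge2) acc.
exact: accessible_SFn_map_of_Fn_map d_ge0 d_refl acc.
Qed.
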